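(* Let $\mathbb{A}$ be as below, $S\subseteq\mathbb{A}$ finite, and $\mathcal{O}\subseteq\mathbb{A}^I$ an $S$-ordered orbit. Then every $a\in\mathcal{O}$ can be extended to an $\mathcal{O}$-duo $a\parallel b$, i.e. there is $b\in\mathcal{O}$ such that $a\parallel b$ is an $\mathcal{O}$-duo.
   Context: $\sigma_0$ is a finite vocabulary of unary and binary relations; $\mathscr{C}_0=\operatorname{Forb}(\mathscr{F})$ is a free amalgamation class of finite irreflexive $\sigma_0$-structures (every member of $\mathscr{F}$ has every two elements related, where $u,v$ are related if $u=v$ or $R(u,v)$ or $R(v,u)$ for some binary $R\in\sigma_0$; irreflexive means binary relations hold only between distinct elements); $\mathbb{A}$ is the Fraïssé limit of the class of all totally ordered (by a new symbol $<$) members of $\mathscr{C}_0$. $I$ is a finite totally ordered index set. For finite $S\subseteq\mathbb{A}$, a tuple $a\in\mathbb{A}^I$ is $S$-ordered if $a_i\notin S$ for all $i$ and $a_i<a_j$ whenever $i<j$; an $S$-ordered orbit is $\mathcal{O}=\operatorname{Aut}(\mathbb{A}/S)\cdot a$ for such $a$, where $\operatorname{Aut}(\mathbb{A}/S)$ is the group of automorphisms fixing $S$ pointwise. An $\mathcal{O}$-duo $a\parallel b$ is a pair $a,b\in\mathcal{O}$ with (1) $a_i<b_i$ for all $i\in I$; (2) $b_i<a_j$ for all $i<j$ in $I$; (3) for every binary $R\in\sigma_0$ and $i,j\in I$: $R(a_i,b_j)\iff R(a_i,a_j)\iff R(b_i,b_j)\iff R(b_i,a_j)$. *)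

From mathcomp Require Import all_boot.
Set Implicit Arguments. Unset Strict Implicit. Unset Printing Implicit Defensive.

(* A finite sigma_0-structure is represented on the carrier 'I_n
   (every finite structure is isomorphic to one of these). For finite
   *ordered* structures we use the natural order of 'I_n (every finite
   total order is isomorphic to it). *)
Record finStr (U B : finType) := FinStr {
  fs_n : nat;
  fs_un : U -> 'I_fs_n -> bool;
  fs_bin : B -> 'I_fs_n -> 'I_fs_n -> bool }.

Arguments fs_n {U B}.
Arguments fs_un {U B}.
Arguments fs_bin {U B}.

Section Defs.
Variables (U B : finType).

Definition fs_embedding (M N : finStr U B) (f : 'I_(fs_n M) -> 'I_(fs_n N)) :=
  injective f /\
  (forall u x, fs_un M u x = fs_un N u (f x)) /\
  (forall R x y, fs_bin M R x y = fs_bin N R (f x) (f y)).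

Definition fs_irreflexive (M : finStr U B) :=
  forall R x, fs_bin M R x x = false.

Definition fs_all_related (M : finStr U B) :=
  forall x y : 'I_(fs_n M), x = y \/ exists R, fs_bin M R x y \/ fs_bin M R y x.

Arguments fs_embedding : clear implicits.

Definition inForb (F : finStr U B -> Prop) (M : finStr U B) :=
  fs_irreflexive M /\
  ~ (exists M', F M' /\ exists f, fs_embedding M' M f).

Variables (T : Type) (uA : U -> T -> Prop) (bA : B -> T -> T -> Prop)
          (ltA : T -> T -> Prop).


Definition strict_total_order :=
  (forall x, ~ ltA x x) /\
  (forall x y z, ltA x y -> ltA y z -> ltA x z) /\
  (forall x y, ltA x y \/ x = y \/ ltA y x).

Definition ord_embedding (M : finStr U B) (f : 'I_(fs_n M) -> T) :=
  injective f /\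
  (forall u x, fs_un M u x <-> uA u (f x)) /\
  (forall R x y, fs_bin M R x y <-> bA R (f x) (f y)) /\
  (forall x y : 'I_(fs_n M), (x < y)%N <-> ltA (f x) (f y)).

Arguments ord_embedding : clear implicits.

Definition automorphism (s : T -> T) :=
  bijective s /\
  (forall u x, uA u x <-> uA u (s x)) /\
  (forall R x y, bA R x y <-> bA R (s x) (s y)) /\
  (forall x y, ltA x y <-> ltA (s x) (s y)).

(* ultrahomogeneity: every isomorphism between finite substructures
   (given by two injective enumerations g, h of the same length n with the
    same quantifier-free type) extends to an automorphism *)
Definition ultrahomogeneous :=
  forall (n : nat) (g h : 'I_n -> T),
    injective g -> injective h ->
    (forall u i, uA u (g i) <-> uA u (h i)) ->
    (forall R i j, bA R (g i) (g j) <-> bA R (h i) (h j)) ->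
    (forall i j, ltA (g i) (g j) <-> ltA (h i) (h j)) ->
    exists s, automorphism s /\ forall i, s (g i) = h i.

(* A (countable, via countType) is the Fraisse limit of the class of all
   totally ordered members of Forb(F): a countable ultrahomogeneous
   ordered structure whose age is exactly that class. *)
Definition is_fraisse_limit (F : finStr U B -> Prop) :=
  strict_total_order /\
  (forall M : finStr U B, (exists f, ord_embedding M f) <-> inForb F M) /\
  ultrahomogeneous.

(* Tuples indexed by the finite totally ordered set I = 'I_k *)
Definition S_ordered (S : T -> Prop) (k : nat) (a : 'I_k -> T) :=
  (forall i, ~ S (a i)) /\ (forall i j : 'I_k, (i < j)%N -> ltA (a i) (a j)).

Definition in_autS_orbit (S : T -> Prop) (k : nat) (a0 a : 'I_k -> T) :=
  exists s, automorphism s /\ (forall x, S x -> s x = x) /\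
            forall i, a i = s (a0 i).

Definition is_duo (S : T -> Prop) (k : nat) (a0 a b : 'I_k -> T) :=
  in_autS_orbit S a0 a /\ in_autS_orbit S a0 b /\
  (forall i, ltA (a i) (b i)) /\
  (forall i j : 'I_k, (i < j)%N -> ltA (b i) (a j)) /\
  (forall R i j,
     (bA R (a i) (b j) <-> bA R (a i) (a j)) /\
     (bA R (a i) (a j) <-> bA R (b i) (b j)) /\
     (bA R (b i) (b j) <-> bA R (b i) (a j))).

End Defs.

From mathcomp Require Import all_boot.
From mathcomp Require Import boolp.
Set Implicit Arguments. Unset Strict Implicit. Unset Printing Implicit Defensive.

(* Give every a_i a twin b_i placed immediately above it and related to
   everything exactly as a_i is (so not to a_i, by irreflexivity).  This
   finite ordered structure on S, a, b omits F: a member of F has all its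
   points related, so it can never use both a point and its twin.  Hence it
   lies in the age of A, and ultrahomogeneity realizes it over S and a; the
   twins form the duo, and a second application of ultrahomogeneity, to the
   map fixing S and sending a to b, puts b in the orbit of a over S. *)

Section Rank.
Variables (X : finType) (lt : X -> X -> Prop).
Hypotheses (lt_irr : forall x, ~ lt x x)
  (lt_trans : forall x y z, lt x y -> lt y z -> lt x z)
  (lt_total : forall x y, lt x y \/ x = y \/ lt y x).

Definition rank (x : X) : nat := #|[pred y | `[< lt y x >]]|.

Lemma rank_lt_card x : rank x < #|X|.
Proof.
apply: proper_card; apply/properP; split; first exact/subsetP.
by exists x => //; rewrite inE; apply/asboolPn/lt_irr.
Qed.

Lemma rank_mono x y : lt x y -> rank x < rank y.
Proof.
move=> lt_xy; apply: proper_card; apply/properP; split.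
  by apply/subsetP => z; rewrite !inE => /asboolP lt_zx; apply/asboolP/(lt_trans lt_zx).
by exists x; rewrite !inE; [apply/asboolP | apply/asboolPn/lt_irr].
Qed.

Lemma ltn_rank x y : rank x < rank y <-> lt x y.
Proof.
split=> [lt_rk|]; last exact: rank_mono.
have [//|[eq_xy|lt_yx]] := lt_total x y; first by rewrite eq_xy ltnn in lt_rk.
by have := rank_mono lt_yx; rewrite ltnNge (ltnW lt_rk).
Qed.

Definition ord_rank x : 'I_#|X| := Ordinal (rank_lt_card x).

Lemma ord_rank_bij : bijective ord_rank.
Proof.
apply: inj_card_bij; last by rewrite card_ord.
move=> x y /(congr1 val) /= eq_rk.
have [lt_xy|[//|lt_yx]] := lt_total x y.
- by have := rank_mono lt_xy; rewrite eq_rk ltnn.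
- by have := rank_mono lt_yx; rewrite eq_rk ltnn.
Qed.

Lemma finStr_relabel (U B : finType) (un : U -> X -> bool)
    (bin : B -> X -> X -> bool) :
  exists (N : finStr U B) (h : X -> 'I_(fs_n N)), bijective h /\
    (forall u x, fs_un N u (h x) = un u x) /\
    (forall R x y, fs_bin N R (h x) (h y) = bin R x y) /\
    (forall x y, (h x < h y)%N <-> lt x y).
Proof.
have [g rankK gK] := ord_rank_bij.
exists (FinStr (fun u p => un u (g p)) (fun R p q => bin R (g p) (g q))), ord_rank.
split; first by exists g.
split=> [u x|]; first by rewrite /= rankK.
split=> [R x y|x y]; first by rewrite /= !rankK.
exact: ltn_rank.
Qed.

End Rank.

Lemma automorphism_comp (U B : finType) (T : Type) (uA : U -> T -> Prop)
    (bA : B -> T -> T -> Prop) (ltA : T -> T -> Prop) (s t : T -> T) :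
  automorphism uA bA ltA s -> automorphism uA bA ltA t ->
  automorphism uA bA ltA (t \o s).
Proof.
move=> [bij_s [us [bs os]]] [bij_t [ut [bt ot]]]; split; first exact: bij_comp.
split=> [u x|]; first by rewrite us ut.
split=> [R x y|x y]; first by rewrite bs bt.
by rewrite os ot.
Qed.

Section Orbits.
Variables (U B : finType) (T : Type) (uA : U -> T -> Prop)
  (bA : B -> T -> T -> Prop) (ltA : T -> T -> Prop) (S : T -> Prop) (k : nat).

Lemma S_ordered_inj (a : 'I_k -> T) :
  (forall x, ~ ltA x x) -> S_ordered ltA S a -> injective a.
Proof.
move=> ltA_irr [_ a_lt] i i' eq_a; apply/val_inj/eqP.
by case: ltngtP => // /a_lt; rewrite eq_a => /ltA_irr.
Qed.

Lemma orbit_S_ordered (a0 a : 'I_k -> T) :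
  S_ordered ltA S a0 -> in_autS_orbit uA bA ltA S a0 a -> S_ordered ltA S a.
Proof.
move=> [a0_notin_S a0_lt] [s [[[si sK _] [_ [_ slt]]] [s_S a_s]]]; split.
  move=> i; rewrite a_s => S_sa0; apply: (a0_notin_S i).
  by have /(congr1 si) := s_S _ S_sa0; rewrite !sK => <-.
by move=> i i' lt_ii'; rewrite !a_s -slt; apply: a0_lt.
Qed.

Lemma orbit_automorphism (a0 a b : 'I_k -> T) (tau : T -> T) :
  in_autS_orbit uA bA ltA S a0 a -> automorphism uA bA ltA tau ->
  (forall x, S x -> tau x = x) -> (forall i, tau (a i) = b i) ->
  in_autS_orbit uA bA ltA S a0 b.
Proof.
move=> [s [auto_s [s_S a_s]]] auto_tau tau_S tau_a.
exists (tau \o s); split; first exact: automorphism_comp.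
split=> [x Sx|i]; first by rewrite /= s_S ?tau_S.
by rewrite -tau_a a_s.
Qed.

End Orbits.

Section FraisseLimit.
Variables (U B : finType) (F : finStr U B -> Prop) (T : choiceType)
  (uA : U -> T -> Prop) (bA : B -> T -> T -> Prop) (ltA : T -> T -> Prop).
Hypothesis HA : is_fraisse_limit uA bA ltA F.
Hypothesis HF : forall M, F M -> fs_all_related M.

Lemma ltA_irr x : ~ ltA x x.
Proof. by case: HA => [[]]. Qed.

Lemma ltA_trans x y z : ltA x y -> ltA y z -> ltA x z.
Proof. by case: HA => [[_ [tr _]] _]; apply: tr. Qed.

Lemma ltA_total x y : ltA x y \/ x = y \/ ltA y x.
Proof. by case: HA => [[_ []]]. Qed.

Lemma induced_inForb (X : finType) (e : X -> T) : injective e ->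
  exists (N : finStr U B) (h : X -> 'I_(fs_n N)), bijective h /\
    (forall u x, fs_un N u (h x) = `[< uA u (e x) >]) /\
    (forall R x y, fs_bin N R (h x) (h y) = `[< bA R (e x) (e y) >]) /\
    inForb F N.
Proof.
move=> inj_e.
have lt_total x y : ltA (e x) (e y) \/ x = y \/ ltA (e y) (e x).
  by have [|[/inj_e|]] := ltA_total (e x) (e y); tauto.
have [N [h [[hi hK hiK] [hu [hb hlt]]]]] :=
  @finStr_relabel X (fun x y => ltA (e x) (e y))
    (fun x => @ltA_irr (e x)) (fun x y z => @ltA_trans (e x) (e y) (e z)) lt_total
    U B (fun u x => `[< uA u (e x) >]) (fun R x y => `[< bA R (e x) (e y) >]).
exists N, h; split; first by exists hi.
do 2 (split=> //).
case: HA => _ [age _]; apply/age; exists (e \o hi); split.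
  by move=> p q /= /inj_e /(congr1 h); rewrite !hiK.
split=> [u p|]; first by rewrite /= -{1}(hiK p) hu asboolE.
split=> [R p q|p q]; first by rewrite /= -{1}(hiK p) -{1}(hiK q) hb asboolE.
by rewrite /= -{1}(hiK p) -{1}(hiK q) hlt.
Qed.

Lemma bA_irr R x : ~ bA R x x.
Proof.
have inj_x : injective (fun _ : 'I_1 => x) by move=> p q _; rewrite (ord1 p) (ord1 q).
have [N [h [_ [_ [hb [irrN _]]]]]] := induced_inForb inj_x.
by move=> Rxx; have := irrN R (h ord0); rewrite hb (asboolT Rxx).
Qed.

Lemma forbidden_not_in_A (M : finStr U B) (e : 'I_(fs_n M) -> T) :
  F M -> injective e ->
  (forall u z, fs_un M u z <-> uA u (e z)) ->
  (forall R z w, fs_bin M R z w <-> bA R (e z) (e w)) -> False.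
Proof.
move=> FM inj_e eu eb; have [N [h [[hi hK _] [hu [hb [_ noF]]]]]] := induced_inForb inj_e.
apply: noF; exists M; split=> //; exists h; split; first exact: can_inj hK.
split=> [u z|R z w]; first by rewrite hu; apply/idP/asboolP => /eu.
by rewrite hb; apply/idP/asboolP => /eb.
Qed.

Lemma embed_in_fraisse_limit (X : finType) (un : U -> X -> bool)
    (bin : B -> X -> X -> bool) (lt : X -> X -> Prop) :
  (forall x, ~ lt x x) -> (forall x y z, lt x y -> lt y z -> lt x z) ->
  (forall x y, lt x y \/ x = y \/ lt y x) ->
  (forall R x, bin R x x = false) ->
  (forall (M : finStr U B) (f : 'I_(fs_n M) -> X), F M -> injective f ->
     (forall u z, fs_un M u z = un u (f z)) ->
     (forall R z w, fs_bin M R z w = bin R (f z) (f w)) -> False) ->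
  exists E : X -> T, injective E /\ (forall u x, un u x <-> uA u (E x)) /\
    (forall R x y, bin R x y <-> bA R (E x) (E y)) /\
    (forall x y, lt x y <-> ltA (E x) (E y)).
Proof.
move=> lt_irr lt_trans lt_total irr_bin omitsF.
have [N [h [[hi hK hiK] [hu [hb hlt]]]]] :=
  finStr_relabel lt_irr lt_trans lt_total un bin.
have [g [inj_g [gu [gb glt]]]] : exists g : 'I_(fs_n N) -> T, ord_embedding uA bA ltA g.
  case: HA => _ [age _]; apply/age; split=> [R p|[M [FM [f [inj_f [fu fb]]]]]].
    by rewrite -(hiK p) hb.
  apply: (omitsF M (hi \o f)) => //.
  - by move=> z w /(can_inj hiK) /inj_f.
  - by move=> u z; rewrite fu /= -{1}(hiK (f z)) hu.
  - by move=> R z w; rewrite fb /= -{1}(hiK (f z)) -{1}(hiK (f w)) hb.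
exists (g \o h); split; first exact: inj_comp inj_g (can_inj hK).
split=> [u x|]; first by rewrite -gu hu.
split=> [R x y|x y]; first by rewrite -gb hb.
by rewrite -glt hlt.
Qed.

Lemma ultrahomogeneous_fin (Y : finType) (g h : Y -> T) :
  injective g -> injective h ->
  (forall u y, uA u (g y) <-> uA u (h y)) ->
  (forall R y z, bA R (g y) (g z) <-> bA R (h y) (h z)) ->
  (forall y z, ltA (g y) (g z) <-> ltA (h y) (h z)) ->
  exists s, automorphism uA bA ltA s /\ forall y, s (g y) = h y.
Proof.
case: HA => _ [_ uh] inj_g inj_h gu gb glt.
have [s [auto_s sg]] := uh #|Y| (g \o enum_val) (h \o enum_val)
  (inj_comp inj_g enum_val_inj) (inj_comp inj_h enum_val_inj)
  (fun u i => gu u (enum_val i)) (fun R i j => gb R (enum_val i) (enum_val j))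
  (fun i j => glt (enum_val i) (enum_val j)).
by exists s; split=> // y; rewrite -(enum_rankK y); apply: sg.
Qed.

Section Twins.
Variables (Y J : finType) (c : Y -> T) (j : J -> Y).
Hypotheses (inj_c : injective c) (inj_j : injective j).

Definition twin_base (x : Y + J) : Y := match x with inl y => y | inr i => j i end.

(* [inr i] is the twin of [inl (j i)], placed immediately above it. *)
Definition twin_lt (x x' : Y + J) : Prop :=
  ltA (c (twin_base x)) (c (twin_base x')) \/ exists i, x = inl (j i) /\ x' = inr i.

Lemma twin_lt_irr x : ~ twin_lt x x.
Proof. by case=> [/ltA_irr|[i []]] // ->. Qed.

Lemma twin_lt_trans x y z : twin_lt x y -> twin_lt y z -> twin_lt x z.
Proof.
case=> [lt_xy|[i [-> ->]]] [lt_yz|[i' [eq_y ->]]].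
- by left; apply: ltA_trans lt_yz.
- by left; rewrite eq_y in lt_xy.
- by left.
- by [].
Qed.

Lemma twin_lt_total x y : twin_lt x y \/ x = y \/ twin_lt y x.
Proof.
have [lt_xy|[/inj_c eq_base|lt_yx]] := ltA_total (c (twin_base x)) (c (twin_base y));
  [by left; left | | by right; right; left].
case: x y eq_base => [y|i] [y'|i'] /= eq_base.
- by right; left; rewrite eq_base.
- by left; right; exists i'; rewrite eq_base.
- by right; right; right; exists i; rewrite eq_base.
- by right; left; rewrite (inj_j eq_base).
Qed.

Lemma twin_embedding : exists e : Y + J -> T, injective e /\
  (forall y, e (inl y) = c y) /\
  (forall u x, uA u (e x) <-> uA u (c (twin_base x))) /\
  (forall R x x', bA R (e x) (e x') <-> bA R (c (twin_base x)) (c (twin_base x'))) /\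
  (forall x x', ltA (e x) (e x') <-> twin_lt x x').
Proof.
pose d x := c (twin_base x).
have [||E [inj_E [Eu [Eb Elt]]]] := @embed_in_fraisse_limit (Y + J)%type
  (fun u x => `[< uA u (d x) >]) (fun R x x' => `[< bA R (d x) (d x') >]) twin_lt
  twin_lt_irr twin_lt_trans twin_lt_total.
- by move=> R x; apply/asboolF/bA_irr.
- move=> M f FM _ fu fb; apply: (@forbidden_not_in_A M (d \o f)) => //.
  + move=> z w /= eq_d; have [//|[R Rzw]] := HF FM z w.
    by case: Rzw; rewrite !fb eq_d => /asboolP /bA_irr.
  + by move=> u z; rewrite fu asboolE.
  + by move=> R z w; rewrite fb asboolE.
have {}Eu u x : uA u (E x) <-> uA u (d x) by rewrite -Eu asboolE.
have {}Eb R x x' : bA R (E x) (E x') <-> bA R (d x) (d x') by rewrite -Eb asboolE.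
have lt_inl y y' : ltA (E (inl y)) (E (inl y')) <-> ltA (c y) (c y').
  by rewrite -Elt; split=> [[//|[i []]]|]; [|left].
have [s [[bij_s [su [sb slt]]] sE]] := @ultrahomogeneous_fin Y (E \o inl) c
  (inj_comp inj_E (@inl_inj Y J)) inj_c (fun u y => Eu u (inl y))
  (fun R y y' => Eb R (inl y) (inl y'))
  lt_inl.
exists (s \o E); split; first exact: inj_comp (bij_inj bij_s) inj_E.
split; first exact: sE.
split=> [u x|]; first by rewrite -su Eu.
split=> [R x x'|x x']; first by rewrite -sb Eb.
by rewrite -slt -Elt.
Qed.

End Twins.

Lemma exists_twin_tuple (S : seq T) (k : nat) (a : 'I_k -> T) :
  injective a -> (forall i, a i \notin S) ->
  exists (b : 'I_k -> T) (tau : T -> T), automorphism uA bA ltA tau /\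
    (forall x, x \in S -> tau x = x) /\ (forall i, tau (a i) = b i) /\
    (forall i, ltA (a i) (b i)) /\
    (forall i i', ltA (a i) (a i') -> ltA (b i) (a i')) /\
    (forall R i i', (bA R (a i) (b i') <-> bA R (a i) (a i')) /\
       (bA R (b i) (b i') <-> bA R (a i) (a i')) /\
       (bA R (b i) (a i') <-> bA R (a i) (a i'))).
Proof.
move=> inj_a a_notin_S.
pose c (y : seq_sub S + 'I_k) := match y with inl x => ssval x | inr i => a i end.
have inj_c : injective c.
  case=> [x|i] [x'|i'] //= eq_c.
  - by congr inl; apply: val_inj.
  - by move: (a_notin_S i'); rewrite -eq_c (ssvalP x).
  - by move: (a_notin_S i); rewrite eq_c (ssvalP x').
  - by rewrite (inj_a _ _ eq_c).
have [e [inj_e [e_inl [eu [eb elt]]]]] := twin_embedding inj_c (@inr_inj (seq_sub S) 'I_k).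
pose lift y : (seq_sub S + 'I_k) + 'I_k :=
  match y with inl x => inl (inl x) | inr i => inr i end.
have base_lift y : twin_base inr (lift y) = y by case: y.
have inj_lift : injective lift by case=> [x|i] [x'|i'] //= [->].
have lift_u u y : uA u (c y) <-> uA u (e (lift y)) by rewrite eu base_lift.
have lift_b R y y' : bA R (c y) (c y') <-> bA R (e (lift y)) (e (lift y')).
  by rewrite eb !base_lift.
have lift_lt y y' : ltA (c y) (c y') <-> ltA (e (lift y)) (e (lift y')).
  by rewrite elt /twin_lt !base_lift; split=> [|[//|[i []]]]; [left | case: y].
have [tau [auto_tau tau_c]] := ultrahomogeneous_fin inj_c
  (inj_comp inj_e inj_lift) lift_u lift_b lift_lt.
have a_e i : a i = e (inl (inr i)) by rewrite e_inl.
exists (e \o inr), tau; split=> //.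
split=> [x Sx|]; first by rewrite -[x]/(c (inl (SeqSub Sx))) tau_c /= e_inl.
split=> [i|]; first exact: (tau_c (inr i)).
split=> [i|]; first by rewrite a_e elt; right; exists i.
split=> [i i' lt_ii'|R i i']; first by rewrite a_e elt; left.
by rewrite !a_e !eb.
Qed.

End FraisseLimit.

Theorem mainTheorem11 (U B : finType) (F : finStr U B -> Prop)
  (HF : forall M, F M -> fs_all_related M)
  (T : countType) (uA : U -> T -> Prop) (bA : B -> T -> T -> Prop)
  (ltA : T -> T -> Prop)
  (HA : is_fraisse_limit uA bA ltA F)
  (S : seq T) (k : nat) (a0 : 'I_k -> T)
  (Ha0 : S_ordered ltA (fun x => x \in S) a0)
  (a : 'I_k -> T) (Ha : in_autS_orbit uA bA ltA (fun x => x \in S) a0 a) :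
  exists b : 'I_k -> T, is_duo uA bA ltA (fun x => x \in S) a0 a b.
Proof.
have a_ord := orbit_S_ordered Ha0 Ha.
have inj_a := S_ordered_inj (ltA_irr HA) a_ord.
have [a_notin_S a_lt] := a_ord.
have [b [tau [auto_tau [tau_S [tau_a [ab [ba rel]]]]]]] :=
  exists_twin_tuple HA HF inj_a (fun i => introN idP (a_notin_S i)).
exists b; split=> //; split; first exact: orbit_automorphism Ha auto_tau tau_S tau_a.
split=> //; split=> [i i' /a_lt /ba //|R i i'].
by have := rel R i i'; tauto.
Qed.
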